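(* Let $r>2$ be an integer, $\delta=1/r$, and define $\ell_1=3$, $\ell_i=2\ell_{i-1}-\lceil\delta\ell_{i-1}\rceil$ for $2\le i\le r$. Let $\gamma_i=T_{\rm rel}(\ell_i)$ and $\epsilon_i=(1-q)^{\lceil\delta\ell_i\rceil}$. Then for all $2\le i\le r$, $$\gamma_i\le\frac{2}{1-\sqrt{\epsilon_{i-1}}}\,\gamma_{i-1}.$$
   Context: Fix $q\in(0,1/2)$, $p=1-q$. $T_{\rm rel}(L)$ is the relaxation time (inverse spectral gap) of the East process on $\{1,\dots,L\}$: the Markov chain on $\{0,1\}^{\{1,\dots,L\}}$ with generator $\mathcal L f(\sigma)=\sum_{x}c_x(\sigma)[\pi_x(f)-f](\sigma)$, $c_1\equiv1$, $c_x(\sigma)=1-\sigma_{x-1}$ ($x\ge2$), $\pi_x(f)$ the average over $\sigma_x\sim$ Bernoulli$(p)$; the gap is $\inf_f\sum_x\pi(c_x\mathrm{Var}_xf)/\mathrm{Var}_\pi(f)$ with $\pi$ the product Bernoulli$(p)$ measure. *)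

From Stdlib Require Import Reals Lra List Arith ClassicalEpsilon.
Import ListNotations.
Open Scope R_scope.

(* Configurations of the East process on {1,...,L}: a list of L booleans,
   site x (1 <= x <= L) is stored at list index x-1; true = occupied (1). *)
Definition config := list bool.

Fixpoint all_configs (L : nat) : list config :=
  match L with
  | O => [ [] ]
  | S n => flat_map (fun s => [true :: s; false :: s]) (all_configs n)
  end.

(* product Bernoulli(p) weight, p = 1 - q *)
Fixpoint weight (q : R) (s : config) : R :=
  match s with
  | [] => 1
  | b :: t => (if b then 1 - q else q) * weight q t
  end.

Definition mu (q : R) (L : nat) (f : config -> R) : R :=
  fold_right Rplus 0 (map (fun s => weight q s * f s) (all_configs L)).

Definition Var (q : R) (L : nat) (f : config -> R) : R :=
  mu q L (fun s => f s * f s) - mu q L f * mu q L f.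

Definition set_site (s : config) (x : nat) (b : bool) : config :=
  firstn (x - 1) s ++ b :: skipn x s.

Definition pi_x (q : R) (x : nat) (f : config -> R) (s : config) : R :=
  (1 - q) * f (set_site s x true) + q * f (set_site s x false).

Definition Var_x (q : R) (x : nat) (f : config -> R) (s : config) : R :=
  pi_x q x (fun t => f t * f t) s - pi_x q x f s * pi_x q x f s.

(* East constraint: c_1 = 1, c_x = 1 - sigma_{x-1} *)
Definition c_x (x : nat) (s : config) : R :=
  match x with
  | O | 1%nat => 1
  | S y => if nth (y - 1) s false then 0 else 1
  end.

Definition Dirichlet (q : R) (L : nat) (f : config -> R) : R :=
  fold_right Rplus 0
    (map (fun x => mu q L (fun s => c_x x s * Var_x q x f s)) (seq 1 L)).

Definition rayleigh_set (q : R) (L : nat) (r : R) : Prop :=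
  exists f : config -> R, Var q L f <> 0 /\ r = Dirichlet q L f / Var q L f.

Definition is_glb (E : R -> Prop) (g : R) : Prop :=
  (forall r, E r -> g <= r) /\ (forall b, (forall r, E r -> b <= r) -> b <= g).

Definition spectral_gap (q : R) (L : nat) : R :=
  epsilon (inhabits 0) (fun g => is_glb (rayleigh_set q L) g).

Definition Trel (q : R) (L : nat) : R := / spectral_gap q L.

Definition ceil_div (a r : nat) : nat := ((a + r - 1) / r)%nat.

(* ell r i = l_i : l_1 = 3, l_i = 2 l_{i-1} - ceil(l_{i-1}/r); (l_0 := 3 unused) *)
Fixpoint ell (r : nat) (i : nat) : nat :=
  match i with
  | O => 3%nat
  | S m => match m with
           | O => 3%nat
           | _ => (2 * ell r m - ceil_div (ell r m) r)%nat
           end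
  end.

Definition eps (q : R) (r i : nat) : R := (1 - q) ^ ceil_div (ell r i) r.

(* Write l = l_{i-1}, k = ceil(l/r) and m = l - k, so that l_i = m + (k + m) and
   eps_{i-1} = (1-q)^k.  Cover the interval of n = m + (k + m) sites by two blocks
   of length l overlapping in k sites.  For a centred f we use two orthogonal
   projections: u, the mean of f over the first block given the last m sites, and
   w, the East projection of f on the last block given the first m sites (it only
   remembers the position of the first empty site among the k overlap sites).
   Each captures all of Var f up to D(f)/gap(l): fibrewise Poincare for u, and for
   w an induction over the overlap, once an empty site is found the rest is a
   shorter free East chain.  Since w is constant unless the k overlap sites are all
   occupied, E[u w] <= sqrt(eps) (E[u^2] + E[w^2]) / 2, and an elementary
   two-projection inequality gives gap(l_i) >= gap(l) (1 - sqrt eps) / 2, which is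
   the theorem after inversion. *)

From Stdlib Require Import Reals.
From Stdlib Require Import Lra Lia List FunctionalExtensionality ClassicalEpsilon.
Import ListNotations.
Open Scope R_scope.

Definition lsum {A : Type} (xs : list A) (g : A -> R) : R :=
  fold_right Rplus 0 (map g xs).

Lemma lsum_cons {A : Type} (x : A) xs g : lsum (x :: xs) g = g x + lsum xs g.
Proof. reflexivity. Qed.

Lemma lsum_app {A : Type} (xs ys : list A) g :
  lsum (xs ++ ys) g = lsum xs g + lsum ys g.
Proof.
  induction xs as [|x xs IH]; unfold lsum in *; simpl; [lra|].
  rewrite IH. ring.
Qed.

Lemma lsum_map {A B : Type} (h : A -> B) xs g :
  lsum (map h xs) g = lsum xs (fun x => g (h x)).
Proof. unfold lsum. rewrite map_map. reflexivity. Qed.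

Lemma lsum_ext {A : Type} (xs : list A) g1 g2 :
  (forall x, In x xs -> g1 x = g2 x) -> lsum xs g1 = lsum xs g2.
Proof.
  intros H. induction xs as [|x xs IH]; auto.
  rewrite !lsum_cons, H, IH; simpl; auto.
  intros; apply H; simpl; auto.
Qed.

Lemma lsum_le {A : Type} (xs : list A) g1 g2 :
  (forall x, In x xs -> g1 x <= g2 x) -> lsum xs g1 <= lsum xs g2.
Proof.
  intros H. induction xs as [|x xs IH]; unfold lsum; simpl; [lra|].
  apply Rplus_le_compat; [apply H; simpl; auto|apply IH; intros; apply H; simpl; auto].
Qed.

Lemma lsum_zero {A : Type} (xs : list A) : lsum xs (fun _ => 0) = 0.
Proof. induction xs as [|x xs IH]; auto. rewrite lsum_cons, IH. ring. Qed.

Lemma lsum_nonneg {A : Type} (xs : list A) g :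
  (forall x, In x xs -> 0 <= g x) -> 0 <= lsum xs g.
Proof. intros H. rewrite <- (lsum_zero xs). apply lsum_le; auto. Qed.

Lemma lsum_flat_map {A B : Type} (h : A -> list B) xs g :
  lsum (flat_map h xs) g = lsum xs (fun x => lsum (h x) g).
Proof. induction xs as [|x xs IH]; auto. simpl. rewrite lsum_app, lsum_cons, IH. reflexivity. Qed.

Lemma lsum_plus {A : Type} (xs : list A) g h :
  lsum xs (fun x => g x + h x) = lsum xs g + lsum xs h.
Proof. induction xs as [|x xs IH]; unfold lsum in *; simpl; [lra|]. rewrite IH. ring. Qed.

Lemma lsum_scal {A : Type} (xs : list A) c g :
  lsum xs (fun x => c * g x) = c * lsum xs g.
Proof. induction xs as [|x xs IH]; unfold lsum in *; simpl; [lra|]. rewrite IH. ring. Qed.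

Lemma mu_0 q f : mu q 0 f = f [].
Proof. unfold mu. simpl. lra. Qed.

Lemma mu_S q l f :
  mu q (S l) f = (1 - q) * mu q l (fun s => f (true :: s)) + q * mu q l (fun s => f (false :: s)).
Proof.
  unfold mu.
  fold (lsum (all_configs (S l)) (fun s => weight q s * f s)).
  fold (lsum (all_configs l) (fun s => weight q s * f (true :: s))).
  fold (lsum (all_configs l) (fun s => weight q s * f (false :: s))).
  simpl. rewrite lsum_flat_map.
  induction (all_configs l) as [|s ss IH]; unfold lsum in *; simpl in *; [lra|].
  rewrite IH. ring.
Qed.

Lemma mu_plus q l f g : mu q l (fun s => f s + g s) = mu q l f + mu q l g.
Proof.
  revert f g; induction l as [|l IH]; intros; rewrite ?mu_0, ?mu_S; auto.
  rewrite !IH. ring.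
Qed.

Lemma mu_scal q l c f : mu q l (fun s => c * f s) = c * mu q l f.
Proof.
  revert f; induction l as [|l IH]; intros; rewrite ?mu_0, ?mu_S; auto.
  rewrite !IH. ring.
Qed.

Lemma mu_scal_r q l c f : mu q l (fun s => f s * c) = mu q l f * c.
Proof.
  rewrite <- (Rmult_comm c), <- mu_scal. f_equal. extensionality s. ring.
Qed.

Lemma mu_const q l c : mu q l (fun _ => c) = c.
Proof. induction l as [|l IH]; rewrite ?mu_0, ?mu_S; auto. rewrite IH. ring. Qed.

Lemma mu_minus q l f g : mu q l (fun s => f s - g s) = mu q l f - mu q l g.
Proof.
  replace (fun s => f s - g s) with (fun s => f s + (-1) * g s)
    by (extensionality s; ring).
  rewrite mu_plus, mu_scal. ring.
Qed.

Lemma mu_ext q l f g :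
  (forall s, length s = l -> f s = g s) -> mu q l f = mu q l g.
Proof.
  revert f g; induction l as [|l IH]; intros f g H; rewrite ?mu_0, ?mu_S.
  - apply H; auto.
  - f_equal; f_equal; apply IH; intros; apply H; simpl; auto.
Qed.

Lemma mu_le q l f g : 0 <= q <= 1 ->
  (forall s, length s = l -> f s <= g s) -> mu q l f <= mu q l g.
Proof.
  intros Hq. revert f g; induction l as [|l IH]; intros f g H; rewrite ?mu_0, ?mu_S.
  - apply H; auto.
  - assert (mu q l (fun s => f (true :: s)) <= mu q l (fun s => g (true :: s)))
      by (apply IH; intros; apply H; simpl; auto).
    assert (mu q l (fun s => f (false :: s)) <= mu q l (fun s => g (false :: s)))
      by (apply IH; intros; apply H; simpl; auto).
    nra.
Qed.

Lemma mu_nonneg q l f : 0 <= q <= 1 ->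
  (forall s, length s = l -> 0 <= f s) -> 0 <= mu q l f.
Proof. intros. rewrite <- (mu_const q l 0). apply mu_le; auto. Qed.

Lemma mu_app q j l F :
  mu q (j + l) F = mu q j (fun a => mu q l (fun b => F (a ++ b))).
Proof.
  revert F; induction j as [|j IH]; intros; simpl.
  - rewrite mu_0. reflexivity.
  - rewrite !mu_S, !IH. reflexivity.
Qed.

Lemma mu_swap q j l G :
  mu q j (fun a => mu q l (fun b => G a b)) = mu q l (fun b => mu q j (fun a => G a b)).
Proof.
  revert G; induction j as [|j IH]; intros.
  - rewrite mu_0. f_equal. extensionality b. rewrite mu_0. reflexivity.
  - rewrite mu_S, !IH, <- !mu_scal, <- mu_plus.
    f_equal. extensionality b. rewrite mu_S. reflexivity.
Qed.

Lemma mu_drop q j l F : mu q (j + l) (fun s => F (skipn j s)) = mu q l F.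
Proof.
  rewrite mu_app, <- (mu_const q j (mu q l F)). apply mu_ext. intros a Ha.
  f_equal. extensionality b. rewrite skipn_app, skipn_all2 by lia.
  rewrite Ha, Nat.sub_diag. reflexivity.
Qed.

Lemma mu_lsum {A : Type} q l (xs : list A) G :
  mu q l (fun s => lsum xs (fun x => G s x)) = lsum xs (fun x => mu q l (fun s => G s x)).
Proof.
  induction xs as [|x xs IH].
  - exact (mu_const q l 0).
  - rewrite lsum_cons, <- IH, <- mu_plus. reflexivity.
Qed.

Lemma set_site_app_l (a b : config) x c : (1 <= x <= length a)%nat ->
  set_site (a ++ b) x c = set_site a x c ++ b.
Proof.
  intros H. unfold set_site. rewrite firstn_app, skipn_app.
  replace (x - 1 - length a)%nat with 0%nat by lia.
  replace (x - length a)%nat with 0%nat by lia.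
  simpl. rewrite app_nil_r, <- app_assoc. reflexivity.
Qed.

Lemma set_site_app_r (a b : config) x c : (1 <= x)%nat ->
  set_site (a ++ b) (length a + x) c = a ++ set_site b x c.
Proof.
  intros H. unfold set_site. rewrite firstn_app, skipn_app.
  replace (length a + x - 1 - length a)%nat with (x - 1)%nat by lia.
  replace (length a + x - length a)%nat with x by lia.
  rewrite firstn_all2, skipn_all2 by lia. simpl. rewrite <- app_assoc. reflexivity.
Qed.

Lemma set_site_length (a : config) x c : (1 <= x <= length a)%nat ->
  length (set_site a x c) = length a.
Proof.
  intros H. unfold set_site. rewrite length_app. simpl.
  rewrite length_firstn, length_skipn. lia.
Qed.

Lemma Var_x_app_l q (a b : config) x F : (1 <= x <= length a)%nat ->
  Var_x q x F (a ++ b) = Var_x q x (fun a' => F (a' ++ b)) a.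
Proof. intros H. unfold Var_x, pi_x. rewrite !set_site_app_l by auto. reflexivity. Qed.

Lemma Var_x_app_r q (a b : config) x F : (1 <= x)%nat ->
  Var_x q (length a + x) F (a ++ b) = Var_x q x (fun b' => F (a ++ b')) b.
Proof. intros H. unfold Var_x, pi_x. rewrite !set_site_app_r by auto. reflexivity. Qed.

(* The local variance is p q (f(s^{x,1}) - f(s^{x,0}))^2. *)
Lemma Var_x_nonneg q x f s : 0 <= q <= 1 -> 0 <= Var_x q x f s.
Proof.
  intros Hq. unfold Var_x, pi_x.
  set (u := f (set_site s x true)). set (v := f (set_site s x false)).
  replace ((1 - q) * (u * u) + q * (v * v) - ((1 - q) * u + q * v) * ((1 - q) * u + q * v))
    with ((1 - q) * q * ((u - v) * (u - v))) by ring.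
  apply Rmult_le_pos; [apply Rmult_le_pos; lra|apply Rle_0_sqr].
Qed.

Lemma c_x_app_l (a b : config) x : (x <= length a)%nat -> c_x x (a ++ b) = c_x x a.
Proof. intros H. destruct x as [|[|y]]; simpl; auto. rewrite app_nth1 by lia. reflexivity. Qed.

Lemma c_x_shift_false (b : config) x : (1 <= x)%nat -> c_x (S x) (false :: b) = c_x x b.
Proof.
  intros H. destruct x as [|[|y]]; simpl; try lia; auto.
  rewrite Nat.sub_0_r. reflexivity.
Qed.

Lemma c_x_app_r (a b : config) x : (1 <= x)%nat ->
  c_x (length a + x) (a ++ b) = c_x (S x) (nth (length a - 1) a false :: b).
Proof.
  intros H. destruct a as [|a0 a'].
  - symmetry. apply c_x_shift_false; auto.
  - remember (a0 :: a') as a. assert (length a >= 1)%nat by (subst; simpl; lia).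
    destruct x as [|[|y]]; try lia.
    + replace (length a + 1)%nat with (S (S (length a - 1))) by lia. simpl.
      rewrite app_nth1, Nat.sub_0_r by lia. reflexivity.
    + replace (length a + S (S y))%nat with (S (S (length a + y))) by lia. simpl.
      rewrite app_nth2 by lia. rewrite !Nat.sub_0_r.
      replace (length a + y - length a)%nat with y by lia. reflexivity.
Qed.

Lemma c_x_bounds x s : 0 <= c_x x s <= 1.
Proof. destruct x as [|[|y]]; simpl; try lra. destruct (nth (y - 0) s false); lra. Qed.

(* The Dirichlet form of the East chain on [l] sites whose site 1 is constrained by
   an extra boundary spin [b] (placed at site 0). *)
Definition Dirichlet_bd (q : R) (b : bool) (l : nat) (phi : config -> R) : R :=
  lsum (seq 1 l) (fun x => mu q l (fun s => c_x (S x) (b :: s) * Var_x q x phi s)).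

(* An empty boundary site imposes no constraint: this is the ordinary Dirichlet form. *)
Lemma Dirichlet_bd_false q l phi : Dirichlet_bd q false l phi = Dirichlet q l phi.
Proof.
  apply lsum_ext. intros x Hx. apply in_seq in Hx.
  f_equal. extensionality s. rewrite c_x_shift_false by lia. reflexivity.
Qed.

Lemma Dirichlet_bd_mono q b b' l phi : 0 <= q <= 1 -> (b = true \/ b' = false) ->
  Dirichlet_bd q b l phi <= Dirichlet_bd q b' l phi.
Proof.
  intros Hq Hb. apply lsum_le. intros x Hx. apply in_seq in Hx. apply mu_le; auto.
  intros s _. apply Rmult_le_compat_r; [apply Var_x_nonneg; auto|].
  destruct x as [|[|y]]; try lia; simpl; [|lra].
  destruct b, b'; destruct Hb; try discriminate; lra.
Qed.

Lemma Dirichlet_bd_nonneg q b l phi : 0 <= q <= 1 -> 0 <= Dirichlet_bd q b l phi.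
Proof.
  intros Hq. apply lsum_nonneg. intros x _. apply mu_nonneg; auto. intros s _.
  apply Rmult_le_pos; [apply c_x_bounds|apply Var_x_nonneg; auto].
Qed.

Lemma Dirichlet_nonneg q l f : 0 <= q <= 1 -> 0 <= Dirichlet q l f.
Proof. intros. rewrite <- Dirichlet_bd_false. apply Dirichlet_bd_nonneg; auto. Qed.

Lemma Dirichlet_ext q l f g :
  (forall s, length s = l -> f s = g s) -> Dirichlet q l f = Dirichlet q l g.
Proof.
  intros H. apply lsum_ext. intros x Hx. apply in_seq in Hx. apply mu_ext. intros s Hs.
  unfold Var_x, pi_x. rewrite !H by (rewrite set_site_length; lia). reflexivity.
Qed.

Lemma Dirichlet_const q l c : Dirichlet q l (fun _ => c) = 0.
Proof.
  rewrite <- (lsum_zero (seq 1 l)). apply lsum_ext. intros x _.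
  rewrite <- (mu_const q l 0). f_equal. extensionality s. unfold Var_x, pi_x. ring.
Qed.

Lemma Dirichlet_shift q l f c : Dirichlet q l (fun t => f t - c) = Dirichlet q l f.
Proof.
  apply lsum_ext. intros x _. f_equal. extensionality s. unfold Var_x, pi_x. ring.
Qed.

Lemma seq_shift_add j s l : seq (j + s) l = map (fun x => (j + x)%nat) (seq s l).
Proof.
  revert s; induction l as [|l IH]; intros; simpl; auto.
  f_equal. rewrite <- IH. f_equal. lia.
Qed.

Lemma Dirichlet_split q j l g :
  Dirichlet q (j + l) g =
  mu q l (fun y => Dirichlet q j (fun a => g (a ++ y)))
  + mu q j (fun a => Dirichlet_bd q (nth (j - 1) a false) l (fun y => g (a ++ y))).
Proof.
  change (Dirichlet q (j + l) g)
    with (lsum (seq 1 (j + l)) (fun x => mu q (j + l) (fun s => c_x x s * Var_x q x g s))).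
  rewrite seq_app, lsum_app. f_equal.
  - transitivity (mu q l (fun y => lsum (seq 1 j)
      (fun x => mu q j (fun a => c_x x a * Var_x q x (fun a' => g (a' ++ y)) a)))); [|reflexivity].
    rewrite mu_lsum. apply lsum_ext. intros x Hx. apply in_seq in Hx.
    rewrite mu_app, mu_swap. apply mu_ext. intros y _. apply mu_ext. intros a Ha.
    rewrite c_x_app_l, Var_x_app_l by lia. reflexivity.
  - replace (1 + j)%nat with (j + 1)%nat by lia. rewrite seq_shift_add, lsum_map.
    unfold Dirichlet_bd. rewrite mu_lsum. apply lsum_ext. intros x Hx. apply in_seq in Hx.
    rewrite mu_app. apply mu_ext. intros a Ha. f_equal. extensionality y.
    rewrite <- Ha, c_x_app_r, Var_x_app_r by lia. reflexivity.
Qed.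

(* Conditioning on site 1 under an occupied boundary: site 1 is frozen, and when it is
   empty the remaining l sites form a free East chain. *)
Lemma Dirichlet_bd_true_S q l phi :
  Dirichlet_bd q true (S l) phi =
  (1 - q) * Dirichlet_bd q true l (fun t => phi (true :: t))
  + q * Dirichlet q l (fun t => phi (false :: t)).
Proof.
  unfold Dirichlet_bd at 1. simpl seq. rewrite lsum_cons.
  replace (mu q (S l) (fun s => c_x 2 (true :: s) * Var_x q 1 phi s)) with 0
    by (rewrite <- (mu_const q (S l) 0); f_equal; extensionality s; simpl; ring).
  rewrite Rplus_0_l, <- seq_shift, lsum_map, <- Dirichlet_bd_false.
  unfold Dirichlet_bd. rewrite <- !lsum_scal, <- lsum_plus.
  apply lsum_ext. intros x Hx. apply in_seq in Hx. rewrite mu_S.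
  destruct x as [|y]; try lia.
  f_equal; f_equal; f_equal; extensionality s; simpl; rewrite ?Nat.sub_0_r; f_equal;
    [exact (Var_x_app_r q [true] s (S y) phi ltac:(lia))
    |exact (Var_x_app_r q [false] s (S y) phi ltac:(lia))].
Qed.

Lemma Var_center q l f :
  Var q l f = mu q l (fun s => (f s - mu q l f) * (f s - mu q l f)).
Proof.
  unfold Var. set (M := mu q l f).
  replace (fun s => (f s - M) * (f s - M))
    with (fun s => (f s * f s + (-2 * M) * f s) + M * M) by (extensionality s; ring).
  rewrite !mu_plus, mu_scal, mu_const. fold M. ring.
Qed.

Lemma Var_nonneg q l f : 0 <= q <= 1 -> 0 <= Var q l f.
Proof. intros. rewrite Var_center. apply mu_nonneg; auto. intros; apply Rle_0_sqr. Qed.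

(* The Rayleigh quotients are nonnegative, and there is one as soon as l >= 1
   (the indicator of site 1), so the infimum defining the spectral gap exists. *)
Lemma rayleigh_nonneg q l x : 0 <= q <= 1 -> rayleigh_set q l x -> 0 <= x.
Proof.
  intros Hq [f [Hv ->]]. assert (0 <= Var q l f) by (apply Var_nonneg; auto).
  apply Rmult_le_pos; [apply Dirichlet_nonneg; auto|].
  left; apply Rinv_0_lt_compat; lra.
Qed.

Lemma rayleigh_inhabited q l : 0 < q < 1 -> (1 <= l)%nat -> exists x, rayleigh_set q l x.
Proof.
  intros Hq Hl. destruct l as [|l]; try lia.
  set (f := fun s : config => match s with true :: _ => 1 | _ => 0 end).
  exists (Dirichlet q (S l) f / Var q (S l) f), f. split; auto.
  unfold Var. rewrite !mu_S. simpl. rewrite !mu_const. nra.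
Qed.

Lemma gap_is_glb q l : 0 < q < 1 -> (1 <= l)%nat ->
  is_glb (rayleigh_set q l) (spectral_gap q l).
Proof.
  intros Hq Hl. unfold spectral_gap. apply epsilon_spec.
  destruct (completeness (fun x => rayleigh_set q l (- x))) as [M [Hub Hlub]].
  - exists 0. intros x Hx. apply rayleigh_nonneg in Hx; lra.
  - destruct (rayleigh_inhabited q l Hq Hl) as [x Hx].
    exists (- x). rewrite Ropp_involutive; auto.
  - exists (- M). split.
    + intros x Hx. assert (- x <= M) by (apply Hub; rewrite Ropp_involutive; auto). lra.
    + intros b Hb. assert (M <= - b) by (apply Hlub; intros x Hx; apply Hb in Hx; lra). lra.
Qed.

Lemma gap_nonneg q l : 0 < q < 1 -> (1 <= l)%nat -> 0 <= spectral_gap q l.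
Proof.
  intros. apply (gap_is_glb q l); auto.
  intros x Hx. apply (rayleigh_nonneg q l); auto. lra.
Qed.

Lemma poincare q l h : 0 < q < 1 -> (1 <= l)%nat ->
  spectral_gap q l * Var q l h <= Dirichlet q l h.
Proof.
  intros Hq Hl. assert (0 <= Var q l h) by (apply Var_nonneg; lra).
  destruct (Req_dec (Var q l h) 0) as [E|E].
  - rewrite E, Rmult_0_r. apply Dirichlet_nonneg; lra.
  - assert (Hr : spectral_gap q l <= Dirichlet q l h / Var q l h)
      by (apply (gap_is_glb q l); auto; exists h; auto).
    apply (Rmult_le_compat_r (Var q l h)) in Hr; [|lra].
    unfold Rdiv in Hr. rewrite Rmult_assoc, Rinv_l, Rmult_1_r in Hr; auto.
Qed.

Lemma gap_ge q l c : 0 < q < 1 -> (1 <= l)%nat ->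
  (forall h, c * Var q l h <= Dirichlet q l h) -> c <= spectral_gap q l.
Proof.
  intros Hq Hl H. apply (gap_is_glb q l); auto.
  intros x [h [Hv ->]]. assert (0 <= Var q l h) by (apply Var_nonneg; lra).
  apply (Rmult_le_reg_r (Var q l h)); [lra|].
  unfold Rdiv. rewrite Rmult_assoc, Rinv_l, Rmult_1_r by auto. apply H.
Qed.

(* The gap is nonincreasing in the length: a function of the last l sites of a chain
   on j + l sites has the same variance and a no larger Dirichlet form. *)
Lemma gap_mono q j l : 0 < q < 1 -> (1 <= l)%nat ->
  spectral_gap q (j + l) <= spectral_gap q l.
Proof.
  intros Hq Hl. apply gap_ge; auto. intros h.
  set (g := fun s : config => h (skipn j s)).
  assert (Hg : forall a y, length a = j -> g (a ++ y) = h y).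
  { intros a y Ha. unfold g. rewrite skipn_app, skipn_all2, Ha, Nat.sub_diag by lia. reflexivity. }
  assert (HV : Var q (j + l) g = Var q l h).
  { unfold Var, g. rewrite (mu_drop q j l (fun t => h t * h t)), mu_drop. reflexivity. }
  assert (HD : Dirichlet q (j + l) g <= Dirichlet q l h).
  { rewrite Dirichlet_split.
    replace (mu q l (fun y => Dirichlet q j (fun a => g (a ++ y)))) with 0.
    2:{ rewrite <- (mu_const q l 0). apply mu_ext. intros y _.
        rewrite <- (Dirichlet_const q j (h y)). apply Dirichlet_ext.
        intros a Ha. rewrite Hg; auto. }
    rewrite Rplus_0_l, <- (mu_const q j (Dirichlet q l h)). apply mu_le; [lra|]. intros a Ha.
    apply Rle_trans with (Dirichlet_bd q false l (fun y => g (a ++ y))).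
    + apply Dirichlet_bd_mono; auto; lra.
    + rewrite Dirichlet_bd_false. right. apply Dirichlet_ext. intros y _. auto. }
  rewrite <- HV. pose proof (poincare q (j + l) g Hq ltac:(lia)). lra.
Qed.

Lemma poincare_shorter q L l h : 0 < q < 1 -> (1 <= L)%nat -> (l <= L)%nat ->
  spectral_gap q L * Var q l h <= Dirichlet q l h.
Proof.
  intros Hq HL Hl. destruct l as [|l].
  - unfold Var, Dirichlet. rewrite !mu_0. simpl. lra.
  - replace L with ((L - S l) + S l)%nat by lia.
    assert (spectral_gap q (L - S l + S l) <= spectral_gap q (S l)) by (apply gap_mono; auto; lia).
    assert (0 <= Var q (S l) h) by (apply Var_nonneg; lra).
    assert (0 <= spectral_gap q (L - S l + S l)) by (apply gap_nonneg; auto; lia).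
    pose proof (poincare q (S l) h Hq ltac:(lia)). nra.
Qed.

(* East projection on k + m sites: the conditional expectation of [phi] given the
   position of the first empty site among the first k sites and, when these k sites
   are all occupied, the last m sites. It is constant off the event "first k sites
   occupied", which has probability (1-q)^k. *)
Fixpoint east_proj (q : R) (k m : nat) (phi : config -> R) {struct k} : config -> R :=
  match k with
  | O => phi
  | S k' => fun s =>
      match s with
      | true :: t => east_proj q k' m (fun t' => phi (true :: t')) t
      | false :: _ => mu q (k' + m) (fun t' => phi (false :: t'))
      | [] => 0
      end
  end.

Lemma east_proj_sq q k m phi :
  mu q (k + m) (fun y => east_proj q k m phi y * east_proj q k m phi y)
  = mu q (k + m) (fun y => phi y * east_proj q k m phi y).
Proof.
  revert phi; induction k as [|k IH]; intros; simpl; auto.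
  rewrite !mu_S. simpl. rewrite IH, mu_const, mu_scal_r. reflexivity.
Qed.

(* Conditioning on site 1: if it is
   occupied we recurse, if it is empty the rest is a free East chain of length k-1+m. *)
Lemma east_proj_poincare q G L k m phi : 0 < q < 1 -> 0 <= G ->
  (forall l h, (l < L)%nat -> G * Var q l h <= Dirichlet q l h) -> (k + m <= L)%nat ->
  G * (mu q (k + m) (fun y => phi y * phi y)
       - mu q (k + m) (fun y => east_proj q k m phi y * east_proj q k m phi y))
  <= Dirichlet_bd q true (k + m) phi.
Proof.
  intros Hq HG Hshort. revert phi; induction k as [|k IH]; intros phi Hk; simpl.
  - rewrite Rminus_diag, Rmult_0_r. apply Dirichlet_bd_nonneg; lra.
  - rewrite Dirichlet_bd_true_S, !mu_S. simpl. rewrite mu_const.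
    pose proof (IH (fun t => phi (true :: t)) ltac:(lia)) as Hocc.
    pose proof (Hshort (k + m)%nat (fun t => phi (false :: t)) ltac:(lia)) as Hemp.
    unfold Var in Hemp. nra.
Qed.

(* The correlation of the projection with a mean-zero function U of the last m sites
   only comes from the event "first k sites occupied":
   2 E[U Q phi] <= lam (1-q)^k E[U^2] + E[(Q phi)^2] / lam  for every lam > 0. *)
Lemma east_proj_cross q k m phi U lam : 0 < q < 1 -> 0 < lam -> mu q m U = 0 ->
  2 * mu q (k + m) (fun y => U (skipn k y) * east_proj q k m phi y)
  <= lam * (1 - q) ^ k * mu q m (fun z => U z * U z)
     + / lam * mu q (k + m) (fun y => east_proj q k m phi y * east_proj q k m phi y).
Proof.
  intros Hq Hl HU. revert phi; induction k as [|k IH]; intros phi; simpl.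
  - rewrite Rmult_1_r, <- !mu_scal, <- mu_plus. apply mu_le; [lra|]. intros s _.
    assert (0 <= (lam * U s - phi s) * (lam * U s - phi s)) by apply Rle_0_sqr.
    apply (Rmult_le_reg_l lam); auto.
    rewrite Rmult_plus_distr_l, <- (Rmult_assoc lam (/ lam)), Rinv_r by lra. nra.
  - rewrite !mu_S. simpl.
    rewrite mu_scal_r, (mu_drop q k m U), HU, mu_const.
    pose proof (IH (fun t => phi (true :: t))) as Hocc.
    set (c := mu q (k + m) (fun t' => phi (false :: t'))).
    assert (0 <= / lam * (q * (c * c))).
    { apply Rmult_le_pos; [left; apply Rinv_0_lt_compat; auto|].
      apply Rmult_le_pos; [lra|apply Rle_0_sqr]. }
    apply (Rmult_le_compat_l (1 - q)) in Hocc; [|lra].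
    nra.
Qed.

(* This is the
   expansion of 0 <= E[(g - (u+w)/(1+s))^2]. *)
Lemma two_projections q l g u w s : 0 <= q <= 1 -> 0 <= s ->
  mu q l (fun x => g x * u x) = mu q l (fun x => u x * u x) ->
  mu q l (fun x => g x * w x) = mu q l (fun x => w x * w x) ->
  2 * mu q l (fun x => u x * w x)
    <= s * (mu q l (fun x => u x * u x) + mu q l (fun x => w x * w x)) ->
  mu q l (fun x => u x * u x) + mu q l (fun x => w x * w x)
    <= (1 + s) * mu q l (fun x => g x * g x).
Proof.
  intros Hq Hs Hu Hw Huw. set (t := / (1 + s)).
  assert (Ht : t * (1 + s) = 1) by (unfold t; field; lra).
  assert (Ht0 : 0 < t) by (unfold t; apply Rinv_0_lt_compat; lra).
  assert (Hsq : 0 <= mu q l (fun x => (g x - t * (u x + w x)) * (g x - t * (u x + w x))))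
    by (apply mu_nonneg; auto; intros; apply Rle_0_sqr).
  replace (fun x => (g x - t * (u x + w x)) * (g x - t * (u x + w x)))
    with (fun x => g x * g x + (-2 * t) * (g x * u x) + (-2 * t) * (g x * w x)
            + (t * t) * (u x * u x) + (t * t) * (w x * w x) + (2 * t * t) * (u x * w x))
    in Hsq by (extensionality x; ring).
  rewrite !mu_plus, !mu_scal, Hu, Hw in Hsq.
  set (A := mu q l (fun x => u x * u x) + mu q l (fun x => w x * w x)) in *.
  set (N := mu q l (fun x => g x * g x)) in *.
  assert (Htt : t * t * (2 * mu q l (fun x => u x * w x)) <= t * t * (s * A))
    by (apply Rmult_le_compat_l; nra).
  assert (HtA : t * A <= N).
  { replace (t * t * (s * A)) with (t * (t * (1 + s)) * A - t * t * A) in Htt by ring.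
    rewrite Ht in Htt. unfold A in *. nra. }
  replace A with ((t * A) * (1 + s))
    by (rewrite Rmult_comm, <- Rmult_assoc, (Rmult_comm (1 + s)), Ht; ring).
  rewrite (Rmult_comm (1 + s) N). apply Rmult_le_compat_r; lra.
Qed.

Definition block_mean (q : R) (L : nat) (g : config -> R) (s : config) : R :=
  mu q L (fun v => g (v ++ skipn L s)).

Lemma block_mean_app q L g (v z : config) : length v = L ->
  block_mean q L g (v ++ z) = mu q L (fun v' => g (v' ++ z)).
Proof.
  intros Hv. unfold block_mean.
  rewrite skipn_app, skipn_all2, Hv, Nat.sub_diag by lia. reflexivity.
Qed.

Lemma block_mean_sq q L m g :
  mu q (L + m) (fun s => block_mean q L g s * block_mean q L g s)
  = mu q m (fun z => mu q L (fun v => g (v ++ z)) * mu q L (fun v => g (v ++ z))).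
Proof.
  exact (mu_drop q L m (fun z => mu q L (fun v => g (v ++ z)) * mu q L (fun v => g (v ++ z)))).
Qed.

Lemma block_mean_inner q L m g :
  mu q (L + m) (fun s => g s * block_mean q L g s)
  = mu q (L + m) (fun s => block_mean q L g s * block_mean q L g s).
Proof.
  rewrite block_mean_sq, mu_app, mu_swap. apply mu_ext. intros z _.
  rewrite <- mu_scal_r. apply mu_ext. intros v Hv. rewrite block_mean_app; auto.
Qed.

Lemma block_mean_poincare q L m g : 0 < q < 1 -> (1 <= L)%nat ->
  spectral_gap q L * (mu q (L + m) (fun s => g s * g s)
                      - mu q (L + m) (fun s => block_mean q L g s * block_mean q L g s))
  <= Dirichlet q (L + m) g.
Proof.
  intros Hq HL. rewrite block_mean_sq, Dirichlet_split, mu_app, mu_swap, <- mu_minus, <- mu_scal.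
  assert (0 <= mu q L (fun a => Dirichlet_bd q (nth (L - 1) a false) m (fun y => g (a ++ y))))
    by (apply mu_nonneg; [lra|]; intros; apply Dirichlet_bd_nonneg; lra).
  enough (mu q m (fun z => spectral_gap q L * (mu q L (fun v => g (v ++ z) * g (v ++ z))
            - mu q L (fun v => g (v ++ z)) * mu q L (fun v => g (v ++ z))))
          <= mu q m (fun z => Dirichlet q L (fun v => g (v ++ z)))) by lra.
  apply mu_le; [lra|]. intros z _. apply (poincare q L (fun v => g (v ++ z)) Hq HL).
Qed.

Definition tail_proj (q : R) (k m : nat) (g : config -> R) (s : config) : R :=
  east_proj q k m (fun y => g (firstn m s ++ y)) (skipn m s).

Lemma tail_proj_app q k m g (a y : config) : length a = m ->
  tail_proj q k m g (a ++ y) = east_proj q k m (fun y' => g (a ++ y')) y.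
Proof.
  intros Ha. unfold tail_proj.
  rewrite firstn_app, skipn_app, firstn_all2, skipn_all2, Ha, Nat.sub_diag by lia.
  simpl. rewrite app_nil_r. reflexivity.
Qed.

Lemma tail_proj_sq q k m g :
  mu q (m + (k + m)) (fun s => tail_proj q k m g s * tail_proj q k m g s)
  = mu q m (fun a => mu q (k + m) (fun y =>
      east_proj q k m (fun y' => g (a ++ y')) y * east_proj q k m (fun y' => g (a ++ y')) y)).
Proof.
  rewrite mu_app. apply mu_ext. intros a Ha. apply mu_ext. intros y _.
  rewrite tail_proj_app; auto.
Qed.

Lemma tail_proj_inner q k m g :
  mu q (m + (k + m)) (fun s => g s * tail_proj q k m g s)
  = mu q (m + (k + m)) (fun s => tail_proj q k m g s * tail_proj q k m g s).
Proof.
  rewrite tail_proj_sq, mu_app. apply mu_ext. intros a Ha. rewrite east_proj_sq.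
  apply mu_ext. intros y _. rewrite tail_proj_app; auto.
Qed.

(* Poincare inequality for the second block: the first m sites are frozen, and the
   occupied boundary is the worst case for the last k + m sites. *)
Lemma tail_proj_poincare q k m g : 0 < q < 1 -> (1 <= k)%nat ->
  spectral_gap q (k + m) * (mu q (m + (k + m)) (fun s => g s * g s)
                      - mu q (m + (k + m)) (fun s => tail_proj q k m g s * tail_proj q k m g s))
  <= Dirichlet q (m + (k + m)) g.
Proof.
  intros Hq Hk. rewrite tail_proj_sq, Dirichlet_split, mu_app, <- mu_minus, <- mu_scal.
  assert (0 <= mu q (k + m) (fun y => Dirichlet q m (fun a => g (a ++ y))))
    by (apply mu_nonneg; [lra|]; intros; apply Dirichlet_nonneg; lra).
  enough (mu q m (fun a => spectral_gap q (k + m) * (mu q (k + m) (fun y => g (a ++ y) * g (a ++ y))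
            - mu q (k + m) (fun y => east_proj q k m (fun y' => g (a ++ y')) y
                                     * east_proj q k m (fun y' => g (a ++ y')) y)))
          <= mu q m (fun a => Dirichlet_bd q (nth (m - 1) a false) (k + m) (fun y => g (a ++ y))))
    by lra.
  apply mu_le; [lra|]. intros a _.
  apply Rle_trans with (Dirichlet_bd q true (k + m) (fun y => g (a ++ y)));
    [|apply Dirichlet_bd_mono; auto; lra].
  apply (east_proj_poincare q _ (k + m)); auto; [apply gap_nonneg; auto; lia|].
  intros l h Hl. apply poincare_shorter; auto; lia.
Qed.

Lemma blocks_cross q k m g : 0 < q < 1 -> mu q (m + (k + m)) g = 0 ->
  2 * mu q (m + (k + m)) (fun s => block_mean q (k + m) g s * tail_proj q k m g s)
  <= sqrt ((1 - q) ^ k) *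
     (mu q (m + (k + m)) (fun s => block_mean q (k + m) g s * block_mean q (k + m) g s)
      + mu q (m + (k + m)) (fun s => tail_proj q k m g s * tail_proj q k m g s)).
Proof.
  intros Hq Hg. set (U := fun z => mu q (k + m) (fun v => g (v ++ z))).
  set (s := sqrt ((1 - q) ^ k)).
  assert (Hpk : 0 < (1 - q) ^ k) by (apply pow_lt; lra).
  assert (Hs : 0 < s) by (apply sqrt_lt_R0; auto).
  assert (Hss : s * s = (1 - q) ^ k) by (apply sqrt_sqrt; lra).
  assert (HU : mu q m U = 0).
  { rewrite <- Hg, Nat.add_comm, mu_app, mu_swap. reflexivity. }
  set (Q := fun a => east_proj q k m (fun y' => g (a ++ y'))).
  assert (Huw : mu q (m + (k + m)) (fun s => block_mean q (k + m) g s * tail_proj q k m g s)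
                = mu q m (fun a => mu q (k + m) (fun y => U (skipn k y) * Q a y))).
  { rewrite mu_app. apply mu_ext. intros a Ha. apply mu_ext. intros y Hy.
    rewrite tail_proj_app by auto. unfold block_mean.
    replace (skipn (k + m) (a ++ y)) with (skipn k y); [reflexivity|].
    rewrite skipn_app, (skipn_all2 a), Ha by lia. simpl. f_equal. lia. }
  assert (Hfibre : forall a, 2 * mu q (k + m) (fun y => U (skipn k y) * Q a y)
             <= s * mu q m (fun z => U z * U z) + s * mu q (k + m) (fun y => Q a y * Q a y)).
  { intros a. eapply Rle_trans;
      [apply (east_proj_cross q k m _ U (/ s)); auto; apply Rinv_0_lt_compat; auto|].
    rewrite Rinv_inv, <- Hss. right. unfold Q. field. lra. }
  rewrite Huw, tail_proj_sq, (Nat.add_comm m (k + m)), block_mean_sq.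
  rewrite <- mu_scal.
  apply Rle_trans with (mu q m (fun a => s * mu q m (fun z => U z * U z)
                                         + s * mu q (k + m) (fun y => Q a y * Q a y))).
  - apply mu_le; [lra|]. auto.
  - rewrite mu_plus, mu_const, mu_scal. right. unfold U, Q. ring.
Qed.

Lemma two_block_poincare q k m f : 0 < q < 1 -> (1 <= k)%nat ->
  spectral_gap q (k + m) * (1 - sqrt ((1 - q) ^ k)) * Var q (m + (k + m)) f
  <= 2 * Dirichlet q (m + (k + m)) f.
Proof.
  intros Hq Hk. set (n := (m + (k + m))%nat).
  set (g := fun s => f s - mu q n f).
  assert (HV : Var q n f = mu q n (fun s => g s * g s)) by apply Var_center.
  assert (HD : Dirichlet q n f = Dirichlet q n g) by (symmetry; apply Dirichlet_shift).
  assert (Hg : mu q n g = 0) by (unfold g; rewrite mu_minus, mu_const; ring).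
  set (u := block_mean q (k + m) g). set (w := tail_proj q k m g).
  assert (Hnk : n = (k + m + m)%nat) by (unfold n; lia).
  assert (B1 := block_mean_poincare q (k + m) m g Hq ltac:(lia)).
  assert (I1 := block_mean_inner q (k + m) m g).
  rewrite <- Hnk in B1, I1. fold u in B1, I1.
  assert (B2 : spectral_gap q (k + m) * (mu q n (fun s => g s * g s) - mu q n (fun s => w s * w s))
               <= Dirichlet q n g) by (apply tail_proj_poincare; auto).
  assert (I2 : mu q n (fun s => g s * w s) = mu q n (fun s => w s * w s)) by apply tail_proj_inner.
  assert (C : 2 * mu q n (fun s => u s * w s)
              <= sqrt ((1 - q) ^ k) * (mu q n (fun s => u s * u s) + mu q n (fun s => w s * w s)))
    by (apply blocks_cross; auto).
  assert (P := two_projections q n g u w (sqrt ((1 - q) ^ k)) ltac:(lra) (sqrt_pos _) I1 I2 C).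
  assert (Hgap : 0 <= spectral_gap q (k + m)) by (apply gap_nonneg; auto; lia).
  rewrite HV, HD. nra.
Qed.

Lemma ceil_div_bounds L r : (1 <= r)%nat -> (1 <= L)%nat -> (1 <= ceil_div L r <= L)%nat.
Proof.
  intros Hr HL. unfold ceil_div. split.
  - apply Nat.div_le_lower_bound; lia.
  - assert ((L + r - 1) / r < S L)%nat by (apply Nat.Div0.div_lt_upper_bound; nia). lia.
Qed.

Lemma ell_ge3 r i : (1 <= r)%nat -> (3 <= ell r i)%nat.
Proof.
  intros Hr. induction i as [|[|j] IH]; try (simpl; lia).
  change (3 <= 2 * ell r (S j) - ceil_div (ell r (S j)) r)%nat.
  pose proof (ceil_div_bounds (ell r (S j)) r Hr ltac:(lia)). lia.
Qed.

Lemma ell_step r j : (1 <= r)%nat ->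
  let k := ceil_div (ell r (S j)) r in
  let m := (ell r (S j) - k)%nat in
  (1 <= k)%nat /\ ell r (S j) = (k + m)%nat /\ ell r (S (S j)) = (m + (k + m))%nat.
Proof.
  intros Hr k m. pose proof (ell_ge3 r (S j) Hr).
  pose proof (ceil_div_bounds (ell r (S j)) r Hr ltac:(lia)).
  change (ell r (S (S j))) with (2 * ell r (S j) - ceil_div (ell r (S j)) r)%nat.
  unfold m, k. lia.
Qed.

Theorem mainTheorem10 (q : R) (r i : nat) :
  0 < q < 1 / 2 -> (2 < r)%nat -> (2 <= i <= r)%nat ->
  Trel q (ell r i) <= 2 / (1 - sqrt (eps q r (i - 1))) * Trel q (ell r (i - 1)).
Proof.
  intros Hq Hr Hi. destruct i as [|[|j]]; try lia.
  replace (S (S j) - 1)%nat with (S j) by lia.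
  assert (Hq1 : 0 < q < 1) by lra.
  destruct (ell_step r j ltac:(lia)) as (Hk & HL & Hn).
  unfold eps, Trel.
  set (k := ceil_div (ell r (S j)) r) in *. set (m := (ell r (S j) - k)%nat) in *.
  rewrite Hn, HL.
  set (s := sqrt ((1 - q) ^ k)).
  assert (Hs : s < 1).
  { rewrite <- sqrt_1. apply sqrt_lt_1_alt. split; [apply pow_le; lra|].
    apply pow_lt_1_compat; [lra|lia]. }
  assert (HG : spectral_gap q (k + m) * (1 - s) / 2 <= spectral_gap q (m + (k + m))).
  { apply gap_ge; auto; [lia|]. intros h.
    pose proof (two_block_poincare q k m h Hq1 Hk) as Htwo. fold s in Htwo.
    unfold Rdiv. nra. }
  assert (HG0 : 0 <= spectral_gap q (k + m)) by (apply gap_nonneg; auto; lia).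
  destruct HG0 as [Gpos|Gzero].
  - apply Rle_trans with (/ (spectral_gap q (k + m) * (1 - s) / 2)).
    + apply Rinv_le_contravar; [|exact HG].
      apply Rdiv_lt_0_compat; [apply Rmult_lt_0_compat|]; lra.
    + right. field. split; lra.
  - (* a vanishing gap on l sites forces a vanishing gap on the longer interval *)
    assert (Hzero : spectral_gap q (m + (k + m)) = 0).
    { pose proof (gap_mono q m (k + m) Hq1 ltac:(lia)).
      pose proof (gap_nonneg q (m + (k + m)) Hq1 ltac:(lia)). lra. }
    rewrite Hzero, <- Gzero, Rinv_0. lra.
Qed.
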